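(* Let $S=((x_i,y_i))_{i=1}^n$ with $y_i\in\{\pm1\}$, let $h_1,\dots,h_T:\mathcal X\to[-1,1]$, $H=\frac1T\sum_{t=1}^Th_t$, and $\kappa\in[0,1/2]$. Let $(P^\star,\theta_H)=\mathrm{Pythia}(S,H,\kappa)$. Then \[ \sum_{t=1}^TM(P^\star,h_t)\le\frac T2+\frac{T\theta_H}{2}, \] where $M(P,h)=\mathbb{E}_{i\sim P}\big[1-\tfrac12|h(x_i)-y_i|\big]$.
   Context: Pythia$(S,H,\kappa)$: let $B=\{i\in[n]:y_iH(x_i)<0\}$ and $\theta=0$; sort $[n]\setminus B$ by the margin $y_iH(x_i)$; while $|B|<\kappa n$, add to $B$ an element $i$ of $[n]\setminus B$ of minimum margin and set $\theta$ to $y_iH(x_i)$. Output $P^\star$, the uniform distribution on $B$, and $\theta_H=\theta$. *)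

From HB Require Import structures.
From mathcomp Require Import all_boot all_order all_algebra.
Set Implicit Arguments. Unset Strict Implicit. Unset Printing Implicit Defensive.
Import Order.TTheory GRing.Theory Num.Theory.
Local Open Scope ring_scope.

Definition avg_hyp (R : realFieldType) (X : Type) (T : nat)
  (h : 'I_T -> X -> R) : X -> R :=
  fun z => T%:R^-1 * \sum_(t < T) h t z.

Definition margin (R : realFieldType) (X : Type) (n : nat)
  (x : 'I_n -> X) (y : 'I_n -> R) (H : X -> R) (i : 'I_n) : R :=
  y i * H (x i).

(* Reachable states (B, theta) of the Pythia(S,H,kappa) loop. *)
Inductive pythia_run (R : realFieldType) (n : nat) (m : 'I_n -> R) (kappa : R)
  : {set 'I_n} -> R -> Prop :=
| pythia_init : pythia_run m kappa [set i | m i < 0] 0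
| pythia_step (B : {set 'I_n}) (theta : R) (i : 'I_n) :
    pythia_run m kappa B theta ->
    #|B|%:R < kappa * n%:R ->
    i \notin B ->
    (forall j, j \notin B -> m i <= m j) ->
    pythia_run m kappa (i |: B) (m i).

Definition pythia_output (R : realFieldType) (n : nat) (m : 'I_n -> R)
  (kappa : R) (B : {set 'I_n}) (theta : R) : Prop :=
  pythia_run m kappa B theta /\ ~ (#|B|%:R < kappa * n%:R).

Definition unif_on (R : realFieldType) (n : nat) (B : {set 'I_n}) : 'I_n -> R :=
  fun i => if i \in B then #|B|%:R^-1 else 0.

Definition Mgain (R : realFieldType) (X : Type) (n : nat)
  (x : 'I_n -> X) (y : 'I_n -> R) (P : 'I_n -> R) (h : X -> R) : R :=
  \sum_(i < n) P i * (1 - `|h (x i) - y i| / 2).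

(* Since y = ±1 and h ∈ [-1, 1], the gain 1 - |h(x) - y|/2 equals (1 + y h(x))/2, so
   summing over t turns the left-hand side into the P*-average of T/2 + T m_i/2,
   where m_i = y_i H(x_i) is the margin. Every point that Pythia put into B has
   margin at most the final threshold θ_H, and when B is empty θ_H = 0. *)
From HB Require Import structures.
From mathcomp Require Import all_boot all_order all_algebra.
From mathcomp Require Import ring lra.
Import Order.TTheory GRing.Theory Num.Theory.
Set Implicit Arguments.
Unset Strict Implicit.
Unset Printing Implicit Defensive.
Local Open Scope ring_scope.

Section PythiaRun.
Variables (R : realFieldType) (n : nat) (m : 'I_n -> R) (kappa : R).

Lemma pythia_run_threshold (B : {set 'I_n}) (theta : R) :
  pythia_run m kappa B theta ->
  {in B, forall j, m j <= theta} /\ {in ~: B, forall j, theta <= m j}.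
Proof.
elim=> [|B0 t0 i _ [le_t0 ge_t0] _ iNB0 i_min].
  by split=> j; rewrite !inE; [apply: ltW | rewrite leNgt].
split=> j; rewrite !inE.
  case/orP=> [/eqP -> //|jB0].
  by apply: le_trans (le_t0 _ jB0) (ge_t0 _ _); rewrite inE.
by rewrite negb_or => /andP[_ jNB0]; apply: i_min.
Qed.

Lemma pythia_run_set0 (B : {set 'I_n}) (theta : R) :
  pythia_run m kappa B theta -> B = set0 -> theta = 0.
Proof.
by case=> // B0 t0 i _ _ _ _ /setP/(_ i); rewrite !inE eqxx.
Qed.

End PythiaRun.

Lemma gain_pm1 (R : realFieldType) (a b : R) : b = 1 \/ b = -1 ->
  -1 <= a <= 1 -> 1 - `|a - b| / 2 = (1 + b * a) / 2.
Proof.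
move=> [->|->] /andP[a_ge a_le].
  by rewrite ler0_norm; [field | lra].
by rewrite ger0_norm; [field | lra].
Qed.

Lemma sum_gain_avg_hyp (R : realFieldType) (X : Type) (T : nat)
  (h : 'I_T -> X -> R) (z : X) (b : R) : (0 < T)%N ->
  b = 1 \/ b = -1 -> (forall t, -1 <= h t z <= 1) ->
  \sum_(t < T) (1 - `|h t z - b| / 2) = T%:R / 2 + T%:R * (b * avg_hyp h z) / 2.
Proof.
move=> T_gt0 b_pm1 h_range; have T_neq0 : T%:R != 0 :> R by rewrite pnatr_eq0 -lt0n.
under eq_bigr => t _ do rewrite gain_pm1 //.
rewrite -mulr_suml big_split /= -mulr_sumr sumr_const card_ord /avg_hyp.
by field.
Qed.

Section UniformOnSet.
Variables (R : realFieldType) (n : nat) (B : {set 'I_n}).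

Lemma sum_unif_onE (f : 'I_n -> R) :
  \sum_(i < n) @unif_on R n B i * f i = #|B|%:R^-1 * \sum_(i in B) f i.
Proof.
rewrite mulr_sumr (bigID (mem B)) /= [X in _ + X]big1 ?addr0 => [|i /negbTE iNB].
  by apply: eq_bigr => i iB; rewrite /unif_on iB.
by rewrite /unif_on iNB mul0r.
Qed.

Lemma sum_unif_on_le (f : 'I_n -> R) (c : R) : B != set0 ->
  {in B, forall i, f i <= c} -> \sum_(i < n) @unif_on R n B i * f i <= c.
Proof.
move=> B_neq0 f_le; have B_gt0 : 0 < #|B|%:R :> R by rewrite ltr0n card_gt0.
rewrite sum_unif_onE ler_pdivrMl //.
rewrite mulr_natl -sumr_const.
exact: ler_sum.
Qed.

End UniformOnSet.

Theorem mainTheorem11 (R : realFieldType) (X : Type) (n T : nat)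
  (x : 'I_n -> X) (y : 'I_n -> R)
  (hy : forall i, y i = 1 \/ y i = -1)
  (h : 'I_T -> X -> R)
  (hT : (0 < T)%N)
  (hrange : forall t z, -1 <= h t z <= 1)
  (kappa : R) (hk : 0 <= kappa <= 1 / 2)
  (B : {set 'I_n}) (thetaH : R)
  (hout : pythia_output (margin x y (avg_hyp h)) kappa B thetaH) :
  \sum_(t < T) Mgain x y (@unif_on R n B) (h t) <= T%:R / 2 + T%:R * thetaH / 2.
Proof.
case: hout => run _.
rewrite /Mgain exchange_big /=.
under eq_bigr => i _ do rewrite -mulr_sumr sum_gain_avg_hyp //.
have [B0|B_neq0] := eqVneq B set0.
  rewrite (pythia_run_set0 run B0).
  rewrite big1 => [|i _]; last by rewrite /unif_on B0 inE mul0r.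
  by rewrite mulr0 mul0r addr0 divr_ge0 ?ler0n.
apply: sum_unif_on_le => // i iB.
rewrite lerD2l ler_pM2r ?invr_gt0 // ler_wpM2l ?ler0n //.
exact: (pythia_run_threshold run).1.
Qed.
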